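(* Let $n,m,\ell$ be integers with $n-1\ge m\ge \ell\ge 0$. Then $$\mathfrak Z_n(2^{\{m\}})\,\mathfrak Z_n((-1)^{\{\ell\}})=\mathcal Y_n\big(2^{\{m-\ell\}},1^{\{\ell\}}\big)+\Big(\prod_{r=1}^{n-1}(1-\zeta_n^r)\Big)\sum_{j=0}^{n-m-2}\mathcal Y_n\big(3^{\{m-\ell+1+j\}},2^{\{\ell-1-j\}},1^{\{n-m-2-j\}}\big).$$
   Context: Let $\zeta_n=e^{2\pi\sqrt{-1}/n}$. For integers $s_1,\dots,s_m$ (negative values allowed), define $\mathfrak Z_n(s_1,\dots,s_m):=\sum_{1\le i_1<\cdots<i_m\le n-1}\prod_{k=1}^{m}(1-\zeta_n^{i_k})^{-s_k}$ (equal to $1$ if $m=0$ and to $0$ if $m>n-1$). Define $\mathcal Y_n(s_1,\dots,s_m):=\sum_{\sigma}\mathfrak Z_n(\sigma)$, where $\sigma$ runs over all distinct rearrangements of $(s_1,\dots,s_m)$; $\mathcal Y_n$ of the empty sequence is $1$. Notation: $a^{\{k\}}$ denotes the block $a,\dots,a$ of length $k$; any $\mathcal Y_n$ term in which some block has negative length is interpreted as $0$. *)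

From mathcomp Require Import all_boot all_order all_algebra.
From mathcomp Require Import complex.
From mathcomp Require Import reals trigo.
Set Implicit Arguments. Unset Strict Implicit. Unset Printing Implicit Defensive.
Import Order.TTheory GRing.Theory Num.Theory.
Local Open Scope ring_scope.
Local Open Scope complex_scope.

Section Defs.
Variable R : realType.

Definition zeta (n : nat) : R[i] :=
  (cos (2 * pi / n%:R) +i* sin (2 * pi / n%:R))%C.

Definition Zfrak (n : nat) (s : seq int) : R[i] :=
  \sum_(t : (size s).-tuple 'I_n |
        sorted ltn (map val t) && all (fun i : 'I_n => 0 < val i)%N t)
    \prod_(k < size s) (1 - zeta n ^+ (val (tnth t k))) ^ (- nth 0 s k).

(* \mathcal Y_n(s) = sum of Zfrak over all distinct rearrangements of s
   (permutations s is duplicate-free). *)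
Definition Ycal (n : nat) (s : seq int) : R[i] :=
  \sum_(sg <- permutations s) Zfrak n sg.

End Defs.

(* Write x_r := 1 - zeta_n^r and record an index tuple of Z_n together with a
   rearrangement of s as the map e sending each position r in 1..n-1 to the
   exponent it carries, or to 0.  For s with entries in {-1, 1, 2, 3}, Y_n(s) is
   then the sum of prod_r x_r^(-e r) over the maps e : {1..n-1} -> {-1,0,1,2,3}
   whose nonzero values form the multiset s.  The product Z_n(2^m) Z_n((-1)^l)
   adds two such maps positionwise, which is a bijection onto the maps without 3
   with #2 + #1 = m and #1 + #(-1) = l.  Those without -1 give Y_n(2^(m-l), 1^l);
   for the others, raising every exponent by one factors out prod_r x_r and, when
   #(-1) = j + 1, yields exactly the maps realizing 3^(m-l+1+j) 2^(l-1-j) 1^(n-m-2-j).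
   Hence the identity holds for arbitrary nonzero weights x_r. *)

From HB Require Import structures.
From mathcomp Require Import all_boot all_order all_algebra.
From mathcomp Require Import complex ring lra.
From mathcomp Require Import reals trigo.
From mathcomp Require Import zify.
Import Order.TTheory GRing.Theory Num.Theory.
Set Implicit Arguments. Unset Strict Implicit. Unset Printing Implicit Defensive.
Local Open Scope ring_scope.

Inductive expo : Set := Eneg | Ezero | Eone | Etwo | Ethree.

Definition expo_val (a : expo) : int :=
  match a with Eneg => -1 | Ezero => 0 | Eone => 1 | Etwo => 2 | Ethree => 3 end.

Definition expo_of_int (k : int) : expo :=
  if k == -1 then Eneg else if k == 1 then Eone else if k == 2 then Etwo
  else if k == 3 then Ethree else Ezero.

Definition expo_ord (a : expo) : 'I_5 :=
  match a with
  | Eneg => @Ordinal 5 0 isT | Ezero => @Ordinal 5 1 isT | Eone => @Ordinal 5 2 isT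
  | Etwo => @Ordinal 5 3 isT | Ethree => @Ordinal 5 4 isT
  end.

Definition ord_expo (i : 'I_5) : expo :=
  match val i with 0 => Eneg | 1 => Ezero | 2 => Eone | 3 => Etwo | _ => Ethree end.

Lemma expo_ordK : cancel expo_ord ord_expo.
Proof. by case. Qed.

HB.instance Definition _ := Finite.copy expo (can_type expo_ordK).

Local Notation nonzero_expos := [:: -1; 1; 2; 3].

Lemma expo_valK : cancel expo_val expo_of_int. Proof. by case. Qed.

Lemma expo_val_inj : injective expo_val. Proof. exact: can_inj expo_valK. Qed.

Lemma expo_of_intK : {in nonzero_expos, cancel expo_of_int expo_val}.
Proof. by move=> k; rewrite !inE => /or4P[] /eqP ->. Qed.

Lemma expo_of_int_neq0 : {in nonzero_expos, forall k, expo_of_int k != Ezero}.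
Proof. by move=> k; rewrite !inE => /or4P[] /eqP ->. Qed.

Lemma count_expo_of_int (s : seq int) c : all (mem nonzero_expos) s ->
  count_mem c (map expo_of_int s) = count_mem (expo_val c) s.
Proof.
move=> /allP sL; rewrite count_map; apply: eq_in_count => k /sL kL /=.
by rewrite -(inj_eq expo_val_inj) expo_of_intK.
Qed.

(* Cyclic only to be a bijection; it is applied to maps avoiding the exponent 3. *)
Definition expo_succ (a : expo) : expo :=
  match a with Eneg => Ezero | Ezero => Eone | Eone => Etwo | Etwo => Ethree | Ethree => Eneg end.

Lemma expo_succ_inj : injective expo_succ. Proof. by case; case. Qed.

Lemma expo_val_succ a : a != Ethree -> expo_val (expo_succ a) = expo_val a + 1.
Proof. by case: a. Qed.

Definition expo_add (a b : expo) : expo := expo_of_int (expo_val a + expo_val b).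

Definition expo_two_part (c : expo) : expo :=
  if (c == Eone) || (c == Etwo) then Etwo else Ezero.

Definition expo_neg_part (c : expo) : expo :=
  if (c == Eneg) || (c == Eone) then Eneg else Ezero.

(* A map e : 'I_n -> expo gives the exponent e i of the position i.+1. *)
Section ExponentMaps.
Variable n : nat.
Implicit Types (e : {ffun 'I_n -> expo}) (s : seq int).

Definition mult e (a : expo) : nat := \sum_(i < n) (e i == a : nat).

Definition realizes e s :=
  [&& mult e Eneg == count_mem (-1) s, mult e Eone == count_mem 1 s,
      mult e Etwo == count_mem 2 s & mult e Ethree == count_mem 3 s].

Lemma mult_eq0P e a : reflect (forall i, e i != a) (mult e a == 0%N).
Proof.
rewrite /mult sum_nat_eq0; apply: (iffP forallP) => H i; have := H i.
  by rewrite eqb0.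
by rewrite eqb0 => ->.
Qed.

Lemma mult_total e :
  (mult e Eneg + mult e Ezero + mult e Eone + mult e Etwo + mult e Ethree)%N = n.
Proof.
rewrite /mult -!big_split /= -[RHS]card_ord -sum1_card.
by apply: eq_bigr => i _; case: (e i).
Qed.

Lemma mult_count e a : mult e a = count (fun i => e i == a) (enum 'I_n).
Proof. by rewrite /mult -sum1_count big_enum_cond [RHS]big_mkcond. Qed.

Lemma realizes_nseq_cat a b c e :
  realizes e (nseq a 3 ++ nseq b 2 ++ nseq c 1) =
  [&& mult e Eneg == 0%N, mult e Eone == c, mult e Etwo == b & mult e Ethree == a].
Proof. by rewrite /realizes !count_cat !count_nseq /= !mul1n !mul0n !add0n !addn0. Qed.

End ExponentMaps.

Definition increasing_pos n N (t : N.-tuple 'I_n) :=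
  sorted ltn (map val t) && all (fun i : 'I_n => 0 < val i)%N t.

Lemma increasing_pos_uniq n N (t : N.-tuple 'I_n) : increasing_pos t -> uniq t.
Proof.
case/andP=> st _; rewrite -(map_inj_uniq val_inj).
exact: (sorted_uniq ltn_trans ltnn).
Qed.

Lemma increasing_pos_ord0 n N (t : N.-tuple 'I_n.+1) : increasing_pos t -> ord0 \notin t.
Proof. by case/andP=> _ /allP H; apply/negP => /H. Qed.

Section Placement.
Variables n N : nat.
Implicit Types (u : N.-tuple expo) (t : N.-tuple 'I_n.+1).

Definition place u t : {ffun 'I_n -> expo} :=
  [ffun i => if lift ord0 i \in t then nth Ezero u (index (lift ord0 i) t) else Ezero].

Lemma big_place (R : Type) (idx : R) (op : Monoid.com_law idx) u t
    (F : 'I_n.+1 -> expo -> R) :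
  (forall x, F x Ezero = idx) -> increasing_pos t ->
  \big[op/idx]_(i < n) F (lift ord0 i) (place u t i) =
  \big[op/idx]_(k < N) F (tnth t k) (tnth u k).
Proof.
move=> F0 /[dup] /increasing_pos_uniq ut /increasing_pos_ord0 t0.
transitivity (\big[op/idx]_(x in t) F x (nth Ezero u (index x t))).
  rewrite [RHS]big_mkcond big_ord_recl /= (negbTE t0) Monoid.mul1m.
  by apply: eq_bigr => i _; rewrite ffunE; case: ifP.
rewrite -(big_uniq _ ut) big_tuple; apply: eq_bigr => k _.
by rewrite (tnth_nth ord0) index_uniq ?size_tuple // -!tnth_nth.
Qed.

Lemma mult_place u t c :
  increasing_pos t -> c != Ezero -> mult (place u t) c = count_mem c u.
Proof.
move=> tP cE; rewrite /mult.
rewrite (@big_place _ _ _ u t (fun _ c' => (c' == c : nat))) //; last first.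
  by move=> x; rewrite eq_sym (negbTE cE).
by rewrite -sum1_count /= big_tuple [RHS]big_mkcond.
Qed.

Lemma place_neq0 u t i :
  Ezero \notin u -> (place u t i != Ezero) = (lift ord0 i \in t).
Proof.
move=> u0; rewrite ffunE; case: ifP => it; last by rewrite eqxx.
apply: contraNN u0 => /eqP <-; apply: mem_nth.
by rewrite size_tuple; have := index_mem (lift ord0 i) t; rewrite it size_tuple.
Qed.

Lemma place_tnth u t j k :
  increasing_pos t -> tnth t k = lift ord0 j -> place u t j = tnth u k.
Proof.
move=> /increasing_pos_uniq ut tk; rewrite ffunE -tk mem_tnth.
by rewrite (tnth_nth ord0) index_uniq ?size_tuple // -tnth_nth.
Qed.

Lemma place_inj :
  {in [pred p : N.-tuple expo * N.-tuple 'I_n.+1 |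
       (Ezero \notin p.1) && increasing_pos p.2] &,
   injective (fun p => place p.1 p.2)}.
Proof.
move=> [u t] [u' t'] /andP[/= u0 tP] /andP[/= u0' tP'] /= E.
have t0 := increasing_pos_ord0 tP; have t0' := increasing_pos_ord0 tP'.
have same_mem : t =i t'.
  move=> x; have [<-|x0] := eqVneq ord0 x; first by rewrite (negbTE t0) (negbTE t0').
  have [j -> _] := unlift_some x0.
  by rewrite -(place_neq0 t j u0) -(place_neq0 t' j u0') E.
have {same_mem t0' u0'} tt' : t = t'.
  apply/val_inj/(@irr_sorted_eq _ (relpre val ltn)) => //.
  - by move=> ???; apply: ltn_trans.
  - by move=> ?; apply: ltnn.
  - by rewrite -sorted_map; case/andP: tP.
  - by rewrite -sorted_map; case/andP: tP'.
subst t'; congr pair; apply: eq_from_tnth => k.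
have [j tk _] := unlift_some (memPnC t0 _ (mem_tnth k t)).
by rewrite -(place_tnth u tP tk) E (place_tnth u' tP tk).
Qed.

End Placement.

Section Realizations.
Variables (n N : nat) (s : seq int).
Hypothesis s_nonzero : all (mem nonzero_expos) s.

Lemma realizes_place (u : N.-tuple expo) (t : N.-tuple 'I_n.+1) :
  perm_eq u (map expo_of_int s) -> increasing_pos t -> realizes (place u t) s.
Proof.
move=> us tP.
have E c : c != Ezero -> mult (place u t) c = count_mem (expo_val c) s.
  by move=> c0; rewrite mult_place // (permP us) count_expo_of_int.
by rewrite /realizes !E //= !eqxx.
Qed.

Lemma place_surj (e : {ffun 'I_n -> expo}) : size s = N -> realizes e s ->
  exists2 p : N.-tuple expo * N.-tuple 'I_n.+1,
    perm_eq p.1 (map expo_of_int s) && increasing_pos p.2 & e = place p.1 p.2.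
Proof.
move=> sN es.
pose r := [seq i <- enum 'I_n | e i != Ezero].
have er : perm_eq (map e r) (map expo_of_int s).
  apply/allP => c _ /=; rewrite count_expo_of_int // count_map count_filter.
  have [->|c0] := eqVneq c Ezero.
    rewrite (@eq_count _ _ pred0) ?count_pred0 => [|i /=]; last by rewrite andbN.
    by rewrite eq_sym; apply/eqP/count_memPn/negP => /(allP s_nonzero).
  rewrite (@eq_count _ _ (fun i => e i == c)) => [|i /=]; last by case: eqP => // ->.
  by rewrite -mult_count; case: c c0 es => //= _ /and4P[].
have uN : size (map e r) == N by rewrite (perm_size er) size_map sN.
have tN : size (map (lift ord0) r) == N by rewrite size_map -(size_map e).
exists (Tuple uN, Tuple tN) => /=.
  rewrite er /increasing_pos /=; apply/andP; split; last first.
    by apply/allP => x /mapP[i _ ->].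
  rewrite -map_comp (@eq_map _ _ _ (succn \o val)) => [|i]; last exact: lift0.
  rewrite map_comp; apply: (@homo_sorted _ _ succn ltn ltn) => //.
  rewrite sorted_map; apply: sorted_filter; first by move=> ???; apply: ltn_trans.
  by rewrite -sorted_map val_enum_ord iota_ltn_sorted.
apply/ffunP => i; rewrite ffunE /= (mem_map (@lift_inj _ ord0)) mem_filter mem_enum andbT.
have [-> //|ei] := eqVneq (e i) Ezero.
have ir : i \in r by rewrite mem_filter mem_enum andbT.
by rewrite (index_map (@lift_inj _ ord0)) (nth_map i) ?index_mem // nth_index.
Qed.

End Realizations.

Section MapOperations.
Variable n : nat.
Implicit Types (e : {ffun 'I_n -> expo}) (p : {ffun 'I_n -> expo} * {ffun 'I_n -> expo}).

Definition shift e : {ffun 'I_n -> expo} := [ffun i => expo_succ (e i)].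

Lemma shift_inj : injective shift.
Proof.
move=> e e' /ffunP E; apply/ffunP => i.
by have := E i; rewrite !ffunE => /expo_succ_inj.
Qed.

Lemma mult_shift e a : mult (shift e) (expo_succ a) = mult e a.
Proof. by apply: eq_bigr => i _; rewrite ffunE (inj_eq expo_succ_inj). Qed.

Definition merge p : {ffun 'I_n -> expo} := [ffun i => expo_add (p.1 i) (p.2 i)].

Definition unmerge e : {ffun 'I_n -> expo} * {ffun 'I_n -> expo} :=
  ([ffun i => expo_two_part (e i)], [ffun i => expo_neg_part (e i)]).

Definition merged m l e :=
  [&& mult e Ethree == 0%N, (mult e Etwo + mult e Eone == m)%N
    & (mult e Eone + mult e Eneg == l)%N].

Lemma merge_unmergeK e : mult e Ethree = 0%N -> merge (unmerge e) = e.
Proof.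
move=> /eqP/mult_eq0P e3; apply/ffunP => i; rewrite !ffunE.
by move: (e3 i); case: (e i).
Qed.

Lemma realizes_two_part e m :
  realizes (unmerge e).1 (nseq m 2) = (mult e Etwo + mult e Eone == m)%N.
Proof.
rewrite /realizes !count_nseq /= mul1n !mul0n.
have mult0 a : a \notin [:: Ezero; Etwo] -> mult (unmerge e).1 a = 0%N.
  move=> a02; apply/eqP/mult_eq0P => i; rewrite ffunE /expo_two_part.
  by case: ifP; case: a a02.
rewrite (mult0 Eneg) // (mult0 Eone) // (mult0 Ethree) //= !andbT.
rewrite /mult -big_split /=; congr (_ == _).
by apply: eq_bigr => i _; rewrite ffunE; case: (e i).
Qed.

Lemma realizes_neg_part e l :
  realizes (unmerge e).2 (nseq l (-1)) = (mult e Eone + mult e Eneg == l)%N.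
Proof.
rewrite /realizes !count_nseq /= mul1n !mul0n.
have mult0 a : a \notin [:: Ezero; Eneg] -> mult (unmerge e).2 a = 0%N.
  move=> a01; apply/eqP/mult_eq0P => i; rewrite ffunE /expo_neg_part.
  by case: ifP; case: a a01.
rewrite (mult0 Eone) // (mult0 Etwo) // (mult0 Ethree) //= !andbT.
rewrite /mult -big_split /=; congr (_ == _).
by apply: eq_bigr => i _; rewrite ffunE; case: (e i).
Qed.

Lemma realizes_nseq_two e m :
  realizes e (nseq m 2) -> forall i, e i \in [:: Ezero; Etwo].
Proof.
rewrite /realizes !count_nseq /= !mul0n.
case/and4P=> /mult_eq0P eneg /mult_eq0P eone _ /mult_eq0P ethree i.
by move: (eneg i) (eone i) (ethree i); case: (e i).
Qed.

Lemma realizes_nseq_neg e l :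
  realizes e (nseq l (-1)) -> forall i, e i \in [:: Ezero; Eneg].
Proof.
rewrite /realizes !count_nseq /= !mul0n.
case/and4P=> _ /mult_eq0P eone /mult_eq0P etwo /mult_eq0P ethree i.
by move: (eone i) (etwo i) (ethree i); case: (e i).
Qed.

Lemma merged_merge m l p :
  realizes p.1 (nseq m 2) -> realizes p.2 (nseq l (-1)) ->
  unmerge (merge p) = p /\ merged m l (merge p).
Proof.
move=> r1 r2; have p1 := realizes_nseq_two r1; have p2 := realizes_nseq_neg r2.
have pK : unmerge (merge p) = p.
  case: p {r1 r2} p1 p2 => q1 q2 /= v1 v2.
  by congr pair; apply/ffunP => i; rewrite !ffunE; move: (v1 i) (v2 i);
    rewrite !inE => /orP[]/eqP-> /orP[]/eqP->.
split=> //; apply/and3P; split.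
- apply/mult_eq0P => i; rewrite ffunE; move: (p1 i) (p2 i).
  by rewrite !inE => /orP[]/eqP-> /orP[]/eqP->.
- by rewrite -realizes_two_part pK.
- by rewrite -realizes_neg_part pK.
Qed.

End MapOperations.

Lemma big_partition_nat (V : nmodType) (I : finType) (P : pred I) (g : I -> nat) K
    (F : I -> V) :
  (forall i, P i -> (g i < K)%N) ->
  \sum_(i | P i) F i = \sum_(k < K) \sum_(i | P i && (g i == k)) F i.
Proof.
move=> gK; under [RHS]eq_bigr do rewrite big_mkcond.
rewrite exchange_big [LHS]big_mkcond; apply: eq_bigr => i _.
case: (boolP (P i)) => Pi /=; last by rewrite big1.
rewrite (bigD1 (Ordinal (gK i Pi))) //= eqxx big1 ?addr0 // => k.
by rewrite -(inj_eq val_inj) /= eq_sym => /negbTE ->.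
Qed.

Section WeightedSums.
Variables (C : fieldType) (w : nat -> C).

(* Zw with the length of the index tuples decoupled from s, so that all
   rearrangements of s share one index type. *)
Definition Zsized n N (s : seq int) : C :=
  \sum_(t : N.-tuple 'I_n | increasing_pos t)
    \prod_(k < N) w (val (tnth t k)) ^ (- nth 0 s k).

Definition Zw n (s : seq int) : C := Zsized n (size s) s.

Definition Yw n (s : seq int) : C := \sum_(sg <- permutations s) Zw n sg.

Definition weight n (e : {ffun 'I_n -> expo}) : C :=
  \prod_(i < n) w i.+1 ^ (- expo_val (e i)).

Lemma Yw_nseq n m (x : int) : Yw n (nseq m x) = Zw n (nseq m x).
Proof.
rewrite /Yw (perm_big [:: nseq m x]) ?big_seq1 //.
apply: uniq_perm => //; first exact: permutations_uniq.
move=> t; rewrite mem_permutations inE; apply/idP/eqP => [st|->]; last exact: perm_refl.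
have tm : size t = m by rewrite (perm_size st) size_nseq.
rewrite -tm; apply/all_pred1P/allP => y yt.
by move: yt; rewrite (perm_mem st) mem_nseq => /andP[_].
Qed.

Lemma big_permutations_tuples N (s : seq int) (F : seq int -> C) :
  all (mem nonzero_expos) s -> size s = N ->
  \sum_(sg <- permutations s) F sg =
  \sum_(u : N.-tuple expo | perm_eq u (map expo_of_int s)) F (map expo_val u).
Proof.
move=> sL sN.
have map_valK : map expo_val (map expo_of_int s) = s.
  by rewrite -map_comp map_id_in // => k /(allP sL) /expo_of_intK.
pose U := [pred u : N.-tuple expo | perm_eq u (map expo_of_int s)].
transitivity (\sum_(sg <- [seq map expo_val (val u) | u <- enum U]) F sg).
  apply: perm_big; apply: uniq_perm.
  - exact: permutations_uniq.
  - by rewrite map_inj_uniq ?enum_uniq // => u v /(inj_map expo_val_inj) /val_inj.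
  move=> sg; rewrite mem_permutations; apply/idP/mapP.
    move=> sg_s; have sgN : size (map expo_of_int sg) == N.
      by rewrite size_map (perm_size sg_s) sN.
    exists (Tuple sgN); first by rewrite mem_enum /=; apply: perm_map.
    rewrite /= -map_comp map_id_in // => k /=.
    by rewrite (perm_mem sg_s) => /(allP sL) /expo_of_intK.
  case=> u; rewrite mem_enum /= => us ->.
  by rewrite -[X in perm_eq _ X]map_valK; apply: perm_map.
by rewrite big_map big_enum.
Qed.

Lemma weight_place n N (u : N.-tuple expo) (t : N.-tuple 'I_n.+1) :
  increasing_pos t ->
  weight (place u t) = \prod_(k < N) w (val (tnth t k)) ^ (- nth 0 (map expo_val u) k).
Proof.
move=> tP; rewrite /weight.
under eq_bigr => i _ do rewrite -[i.+1](lift0 i).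
rewrite (@big_place _ _ _ _ _ u t (fun x a => w (val x) ^ (- expo_val a))) //.
by apply: eq_bigr => k _; rewrite (nth_map Ezero) ?size_tuple // -tnth_nth.
Qed.

Lemma Yw_realizations n (s : seq int) : all (mem nonzero_expos) s ->
  Yw n.+1 s = \sum_(e : {ffun 'I_n -> expo} | realizes e s) weight e.
Proof.
move=> sL; pose N := size s.
rewrite /Yw (eq_big_seq (Zsized n.+1 N)); last first.
  by move=> sg; rewrite mem_permutations /Zw => /perm_size ->.
rewrite (big_permutations_tuples _ sL erefl) /Zsized pair_big_dep /=.
pose A := [pred p : N.-tuple expo * N.-tuple 'I_n.+1 |
           perm_eq p.1 (map expo_of_int s) && increasing_pos p.2].
have -> : \sum_(e : {ffun 'I_n -> expo} | realizes e s) weight e =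
          \sum_(e in [set place p.1 p.2 | p in A]) weight e.
  apply: eq_bigl => e; apply/idP/imsetP => [es|[p /andP[us tP] ->]].
    by have [p pA ->] := place_surj sL erefl es; exists p.
  exact: realizes_place.
have notin0 u : perm_eq u (map expo_of_int s) -> Ezero \notin u.
  move=> us; rewrite (perm_mem us); apply/mapP => -[k /(allP sL)].
  by move=> /expo_of_int_neq0 /[swap] <-; rewrite eqxx.
rewrite big_imset /= => [|p q /andP[pu pt] /andP[qu qt]]; last first.
  by apply: place_inj; rewrite inE /= ?notin0.
by apply: eq_big => // p /andP[_ tP]; rewrite weight_place.
Qed.


Lemma weight_merge n (p : {ffun 'I_n -> expo} * {ffun 'I_n -> expo}) :
  (forall i, (i < n)%N -> w i.+1 != 0) ->
  (forall i, p.1 i \in [:: Ezero; Etwo]) -> (forall i, p.2 i \in [:: Ezero; Eneg]) ->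
  weight (merge p) = weight p.1 * weight p.2.
Proof.
move=> wnz v1 v2; rewrite /weight -big_split /=; apply: eq_bigr => i _.
rewrite ffunE -expfzDr ?wnz // -opprD.
by move: (v1 i) (v2 i); rewrite !inE => /orP[]/eqP-> /orP[]/eqP->.
Qed.

Lemma weight_shift n (e : {ffun 'I_n -> expo}) :
  (forall i, (i < n)%N -> w i.+1 != 0) -> mult e Ethree = 0%N ->
  weight e = (\prod_(i < n) w i.+1) * weight (shift e).
Proof.
move=> wnz /eqP/mult_eq0P e3; rewrite /weight -big_split /=; apply: eq_bigr => i _.
rewrite ffunE expo_val_succ // -{2}[w i.+1]expr1z -expfzDr ?wnz //.
by rewrite opprD addrCA subrr addr0.
Qed.

Lemma weight_sum_mul_nseq n m l :
  (forall i, (i < n)%N -> w i.+1 != 0) ->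
  (\sum_(e : {ffun 'I_n -> expo} | realizes e (nseq m 2)) weight e) *
  (\sum_(e : {ffun 'I_n -> expo} | realizes e (nseq l (-1))) weight e) =
  \sum_(e : {ffun 'I_n -> expo} | merged m l e) weight e.
Proof.
move=> wnz; rewrite mulr_suml; under eq_bigr do rewrite mulr_sumr.
rewrite pair_big_dep /= [RHS](reindex_onto (@merge n) (@unmerge n)); last first.
  by move=> e /and3P[/eqP e3 _ _]; apply: merge_unmergeK.
apply: eq_big => [p|p /andP[r1 r2]]; last first.
  by rewrite weight_merge //; [exact: realizes_nseq_two r1 | exact: realizes_nseq_neg r2].
apply/idP/idP => [/andP[r1 r2]|/andP[/and3P[_ me1 me2] /eqP pK]].
  by have [-> ->] := merged_merge r1 r2; rewrite eqxx.
by rewrite -pK realizes_two_part realizes_neg_part me1.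
Qed.

Lemma merged_shift_sum n m l j :
  (forall i, (i < n)%N -> w i.+1 != 0) -> (l <= m)%N -> (j < l)%N -> (j < n - m)%N ->
  \sum_(e : {ffun 'I_n -> expo} | merged m l e && (mult e Eneg == j.+1)) weight e =
  (\prod_(i < n) w i.+1) *
  \sum_(e : {ffun 'I_n -> expo} |
        realizes e (nseq (m - l + 1 + j) 3 ++ nseq (l - 1 - j) 2
                    ++ nseq (n.+1 - m - 2 - j) 1)) weight e.
Proof.
move=> wnz lm jl jn; rewrite mulr_sumr [RHS](reindex_inj (@shift_inj n)).
apply: eq_big => [e|e /andP[/and3P[/eqP e3 _ _] _]]; last exact: weight_shift.
rewrite realizes_nseq_cat (mult_shift e Ethree : mult (shift e) Eneg = _).
rewrite (mult_shift e Ezero : mult (shift e) Eone = _).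
rewrite (mult_shift e Eone : mult (shift e) Etwo = _).
rewrite (mult_shift e Etwo : mult (shift e) Ethree = _).
by rewrite /merged; move: (mult_total e); lia.
Qed.


Lemma Zw_nseq2_mul_nseqN1 n m l :
  (m <= n)%N -> (l <= m)%N -> (forall i, (i < n)%N -> w i.+1 != 0) ->
  Zw n.+1 (nseq m 2) * Zw n.+1 (nseq l (-1)) =
  Yw n.+1 (nseq (m - l) 2 ++ nseq l 1) +
  (\prod_(1 <= r < n.+1) w r) *
    \sum_(0 <= j < n.+1 - m - 1)
      (if (j < l)%N then Yw n.+1 (nseq (m - l + 1 + j) 3 ++ nseq (l - 1 - j) 2
                                     ++ nseq (n.+1 - m - 2 - j) 1) else 0).
Proof.
move=> mn lm wnz.
have Yw_blocks a b c : Yw n.+1 (nseq a 3 ++ nseq b 2 ++ nseq c 1) =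
    \sum_(e : {ffun 'I_n -> expo} | realizes e (nseq a 3 ++ nseq b 2 ++ nseq c 1)) weight e.
  by apply: Yw_realizations; rewrite !all_cat !all_nseq !orbT.
rewrite -!Yw_nseq !Yw_realizations ?all_cat ?all_nseq ?orbT // weight_sum_mul_nseq //.
rewrite (big_partition_nat (g := fun e => mult e Eneg) (K := (n - m).+1)); last first.
  by move=> e /and3P[_ /eqP e21 _]; move: (mult_total e); lia.
rewrite big_ord_recl; congr (_ + _).
  by apply: eq_bigl => e; rewrite (realizes_nseq_cat 0) /merged /=; lia.
have -> : \prod_(1 <= r < n.+1) w r = \prod_(i < n) w i.+1.
  by rewrite big_add1 big_mkord.
have -> : (n.+1 - m - 1 = n - m)%N by lia.
rewrite big_mkord mulr_sumr; apply: eq_bigr => j _; rewrite lift0.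
case: ltnP => jl; first by rewrite merged_shift_sum // Yw_blocks.
by rewrite mulr0 big_pred0 // => e; apply/negbTE; rewrite /merged; lia.
Qed.

End WeightedSums.

Section RootsOfUnity.
Variable R : realType.
Local Open Scope complex_scope.

Lemma zeta_exp (n k : nat) :
  zeta R n ^+ k = (cos ((2 * pi / n%:R) *+ k) +i* sin ((2 * pi / n%:R) *+ k))%C.
Proof.
rewrite /zeta; set t := 2 * pi / n%:R.
elim: k => [|k IH]; first by rewrite expr0 !mulr0n cos0 sin0.
rewrite exprS IH (mulrSr t) cosD sinD.
apply/eqP; rewrite eq_complex /=; apply/andP; split; apply/eqP.
  by rewrite [cos (t *+ k) * _]mulrC [sin (t *+ k) * _]mulrC.
by rewrite addrC [cos (t *+ k) * _]mulrC [sin (t *+ k) * _]mulrC addrC.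
Qed.

Lemma one_sub_zeta_exp_neq0 (n k : nat) : (0 < k < n)%N -> 1 - zeta R n ^+ k != 0.
Proof.
move=> /andP[k0 kn]; rewrite subr_eq0 eq_sym zeta_exp.
set x := (2 * pi / n%:R) *+ k.
have n0 : (0 < n)%N by apply: leq_ltn_trans kn.
have nR : n%:R != 0 :> R by rewrite pnatr_eq0 -lt0n.
have pi2 : 0 < pi *+ 2 :> R by rewrite pmulrn_lgt0 // pi_gt0.
have xE : x = (pi *+ 2) * (k%:R / n%:R) by rewrite /x -mulr_natr mulr2n; field.
have x0 : 0 < x by rewrite xE mulr_gt0 // divr_gt0 ?ltr0n.
have x2 : x < pi *+ 2 by rewrite xE gtr_pMr // ltr_pdivrMr ?ltr0n // mul1r ltr_nat.
apply/negP => /eqP [c1 s0].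
have [xp|xp|xp] := ltgtP x pi.
- by have := @sin_gt0_pi _ x; rewrite x0 xp s0 ltxx => /(_ isT).
- have : 0 < sin (x - pi).
    by apply: sin_gt0_pi; rewrite subr_gt0 xp /= ltrBlDr -mulr2n.
  have := sinDpi (x - pi); rewrite subrK s0 => /eqP.
  by rewrite eq_sym oppr_eq0 => /eqP ->; rewrite ltxx.
- by move: c1; rewrite xp cospi; lra.
Qed.

End RootsOfUnity.

Theorem proposition2 (R : realType) (n m l : nat) (hmn : (m < n)%N) (hlm : (l <= m)%N) :
  Zfrak R n (nseq m (2 : int)) * Zfrak R n (nseq l (-1 : int)) =
  Ycal R n (nseq (m - l) (2 : int) ++ nseq l (1 : int))
  + (\prod_(1 <= r < n) (1 - zeta R n ^+ r))
    * \sum_(0 <= j < n - m - 1)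
        (if (j < l)%N then
           Ycal R n (nseq (m - l + 1 + j) (3 : int) ++ nseq (l - 1 - j) (2 : int)
                     ++ nseq (n - m - 2 - j) (1 : int))
         else 0).
Proof.
case: n hmn => [//|n] hmn.
apply: (Zw_nseq2_mul_nseqN1 (w := fun r => 1 - zeta R n.+1 ^+ r)) => // i ni.
exact: one_sub_zeta_exp_neq0.
Qed.
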